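(* Let $A$ and $D$ be unital $C^*$-algebras and let $X$ be a right Hilbert $A$-module. Suppose $\rho:A\to D$ is a unital injective homomorphism, $V:X\to D$ is a linear map, and $\{u_i\}_{i=1}^n\subset X$, satisfying $V_\xi\rho(a)=V_{\xi a}$, $V_\xi^*V_\eta=\rho(\langle\xi,\eta\rangle_A)$ and $\sum_{i=1}^n V_{u_i}V_{u_i}^*=1$ for all $a\in A$ and $\xi,\eta\in X$. Then $V$ is injective and $\{u_i\}_{i=1}^n$ is a finite basis of $X$. Moreover, if $V_{u_i}^*V_{u_j}=\delta_{ij}1$ for all $i,j$, then $\{u_i\}_{i=1}^n$ is a finite orthonormal basis of $X$.
   Context: A finite set $\{u_i\}_{i=1}^n\subset X$ is a finite basis of $X$ if $\xi=\sum_{i=1}^n u_i\langle u_i,\xi\rangle_A$ for all $\xi\in X$; it is orthonormal if in addition $\langle u_i,u_j\rangle_A=\delta_{ij}1$ for all $i,j$. *)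

From HB Require Import structures.
From mathcomp Require Import all_boot all_order all_algebra.
From mathcomp Require Import reals.
From mathcomp Require Import complex.
Set Implicit Arguments. Unset Strict Implicit. Unset Printing Implicit Defensive.
Import Order.TTheory GRing.Theory Num.Theory.
Local Open Scope ring_scope.
Local Open Scope complex_scope.

Definition complete_wrt (T : zmodType) (R : realType) (nrm : T -> R) : Prop :=
  forall u : nat -> T,
    (forall e : R, 0 < e -> exists N : nat, forall m k : nat,
        (N <= m)%N -> (N <= k)%N -> nrm (u m - u k) < e) ->
    exists l : T, forall e : R, 0 < e -> exists N : nat, forall k : nat,
        (N <= k)%N -> nrm (u k - l) < e.

Record is_unital_Cstar_algebra (R : realType) (A : algType R[i])
    (star : A -> A) (nrm : A -> R) : Prop := {
  cs_star_add : forall a b, star (a + b) = star a + star b;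
  cs_star_scale : forall (c : R[i]) a, star (c *: a) = c^* *: star a;
  cs_star_mul : forall a b, star (a * b) = star b * star a;
  cs_star_invol : forall a, star (star a) = a;
  cs_norm_eq0 : forall a, nrm a = 0 <-> a = 0;
  cs_norm_triangle : forall a b, nrm (a + b) <= nrm a + nrm b;
  cs_norm_scale : forall (c : R[i]) a, (nrm (c *: a))%:C = `|c| * (nrm a)%:C;
  cs_norm_submult : forall a b, nrm (a * b) <= nrm a * nrm b;
  cs_Cstar_identity : forall a, nrm (star a * a) = nrm a ^+ 2;
  cs_complete : complete_wrt nrm
}.

Definition cs_positive (R : realType) (A : algType R[i]) (star : A -> A) (a : A) :=
  exists b : A, a = star b * b.

Record is_right_Hilbert_module (R : realType) (A : algType R[i])
    (star : A -> A) (nrm : A -> R) (X : lmodType R[i])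
    (act : X -> A -> X) (ip : X -> X -> A) : Prop := {
  hm_act_addl : forall x y a, act (x + y) a = act x a + act y a;
  hm_act_addr : forall x a b, act x (a + b) = act x a + act x b;
  hm_act_mul : forall x a b, act x (a * b) = act (act x a) b;
  hm_act_one : forall x, act x 1 = x;
  hm_act_scalel : forall (c : R[i]) x a, act (c *: x) a = c *: act x a;
  hm_act_scaler : forall (c : R[i]) x a, act x (c *: a) = c *: act x a;
  hm_ip_addr : forall x y z, ip x (y + z) = ip x y + ip x z;
  hm_ip_scaler : forall (c : R[i]) x y, ip x (c *: y) = c *: ip x y;
  hm_ip_act : forall x y a, ip x (act y a) = ip x y * a;
  hm_ip_star : forall x y, star (ip x y) = ip y x;
  hm_ip_pos : forall x, cs_positive star (ip x x);
  hm_ip_definite : forall x, ip x x = 0 -> x = 0;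
  hm_complete : complete_wrt (fun x => Num.sqrt (nrm (ip x x)))
}.

Record is_unital_star_hom (R : realType) (A D : algType R[i])
    (starA : A -> A) (starD : D -> D) (rho : A -> D) : Prop := {
  sh_add : forall a b, rho (a + b) = rho a + rho b;
  sh_scale : forall (c : R[i]) a, rho (c *: a) = c *: rho a;
  sh_mul : forall a b, rho (a * b) = rho a * rho b;
  sh_one : rho 1 = 1;
  sh_star : forall a, rho (starA a) = starD (rho a)
}.

Definition C_linear (R : realType) (X Y : lmodType R[i]) (f : X -> Y) : Prop :=
  (forall x y, f (x + y) = f x + f y) /\ (forall (c : R[i]) x, f (c *: x) = c *: f x).

Definition finite_basis (R : realType) (A : algType R[i]) (X : lmodType R[i])
    (act : X -> A -> X) (ip : X -> X -> A) (n : nat) (u : 'I_n -> X) : Prop :=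
  forall x : X, x = \sum_(i < n) act (u i) (ip (u i) x).

Definition orthonormal_finite_basis (R : realType) (A : algType R[i])
    (X : lmodType R[i]) (act : X -> A -> X) (ip : X -> X -> A)
    (n : nat) (u : 'I_n -> X) : Prop :=
  finite_basis act ip u /\ (forall i j : 'I_n, ip (u i) (u j) = (i == j)%:R).

From HB Require Import structures.
From mathcomp Require Import all_boot all_order all_algebra.
From mathcomp Require Import reals.
From mathcomp Require Import complex.
Set Implicit Arguments. Unset Strict Implicit. Unset Printing Implicit Defensive.
Import Order.TTheory GRing.Theory Num.Theory.
Local Open Scope ring_scope.

(* Since V is an isometry into D, V_x^* V_x = rho <x, x> detects x = 0, so V is
   injective.  The Cuntz-type relation sum_i V_{u_i} V_{u_i}^* = 1 then turns
   V_x = sum_i V_{u_i} V_{u_i}^* V_x = sum_i V_{u_i} rho <u_i, x> = V (sum_i u_i <u_i, x>)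
   into the reconstruction formula, and V_{u_i}^* V_{u_j} = rho <u_i, u_j> transfers
   orthonormality back to A through the injectivity of rho.  None of the analytic
   (C*-) structure is needed. *)

Section AdditiveMaps.

Variables (U W : zmodType) (f : U -> W).
Hypothesis fD : {morph f : x y / x + y}.

Lemma additive_map0 : f 0 = 0.
Proof. by apply: (addrI (f 0)); rewrite -fD !addr0. Qed.

Lemma additive_mapN x : f (- x) = - f x.
Proof. by apply: (addrI (f x)); rewrite -fD !subrr additive_map0. Qed.

Lemma additive_mapB x y : f (x - y) = f x - f y.
Proof. by rewrite fD additive_mapN. Qed.

Lemma additive_map_sum (I : Type) (r : seq I) (F : I -> U) :
  f (\sum_(i <- r) F i) = \sum_(i <- r) f (F i).
Proof. exact: (big_morph f fD additive_map0). Qed.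

Lemma additive_mapMn x k : f (x *+ k) = f x *+ k.
Proof. by elim: k => [|k IHk]; rewrite ?additive_map0 // !mulrS fD IHk. Qed.

End AdditiveMaps.

Section IsometricRepresentation.

Variables (A D : pzRingType) (X : zmodType) (starD : D -> D).
Variables (act : X -> A -> X) (ip : X -> X -> A) (rho : A -> D) (V : X -> D).

Hypothesis ip_definite : forall x, ip x x = 0 -> x = 0.
Hypothesis rhoD : {morph rho : a b / a + b}.
Hypothesis rho1 : rho 1 = 1.
Hypothesis rho_inj : injective rho.
Hypothesis VD : {morph V : x y / x + y}.
Hypothesis V_act : forall x a, V x * rho a = V (act x a).
Hypothesis V_ip : forall x y, starD (V x) * V y = rho (ip x y).

Lemma isometry_injective : injective V.
Proof.
move=> x y Vxy; apply/eqP; rewrite -subr_eq0; apply/eqP/ip_definite/rho_inj.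
by rewrite -V_ip additive_mapB // Vxy subrr mulr0 additive_map0.
Qed.

Lemma isometry_act_ip y x : V (act y (ip y x)) = V y * starD (V y) * V x.
Proof. by rewrite -mulrA V_ip V_act. Qed.

Lemma reconstruction_of_isometries (n : nat) (u : 'I_n -> X) :
  \sum_(i < n) V (u i) * starD (V (u i)) = 1 ->
  forall x, x = \sum_(i < n) act (u i) (ip (u i) x).
Proof.
move=> frame x; apply: isometry_injective.
rewrite additive_map_sum // -[LHS]mul1r -frame mulr_suml.
by apply: eq_bigr => i _; rewrite isometry_act_ip.
Qed.

Lemma ip_orthonormal_of_isometries (n : nat) (u : 'I_n -> X) :
  (forall i j : 'I_n, starD (V (u i)) * V (u j) = (i == j)%:R) ->
  forall i j : 'I_n, ip (u i) (u j) = (i == j)%:R.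
Proof.
by move=> orth i j; apply: rho_inj; rewrite -V_ip orth additive_mapMn // rho1.
Qed.

End IsometricRepresentation.

Theorem lemma2p4 (R : realType)
  (A : algType R[i]) (starA : A -> A) (nA : A -> R)
  (HA : is_unital_Cstar_algebra starA nA)
  (D : algType R[i]) (starD : D -> D) (nD : D -> R)
  (HD : is_unital_Cstar_algebra starD nD)
  (X : lmodType R[i]) (act : X -> A -> X) (ip : X -> X -> A)
  (HX : is_right_Hilbert_module starA nA act ip)
  (rho : A -> D) (Hrho : is_unital_star_hom starA starD rho)
  (Hrho_inj : injective rho)
  (V : X -> D) (HV : C_linear V)
  (n : nat) (u : 'I_n -> X)
  (HVrho : forall (x : X) (a : A), V x * rho a = V (act x a))
  (HVip : forall x y : X, starD (V x) * V y = rho (ip x y))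
  (HVsum : \sum_(i < n) V (u i) * starD (V (u i)) = 1) :
  injective V /\ finite_basis act ip u /\
  ((forall i j : 'I_n, starD (V (u i)) * V (u j) = (i == j)%:R) ->
     orthonormal_finite_basis act ip u).
Proof.
have ip_definite := hm_ip_definite HX.
have rhoD := sh_add Hrho.
have [VD _] := HV.
have basis : finite_basis act ip u :=
  reconstruction_of_isometries ip_definite rhoD Hrho_inj VD HVrho HVip HVsum.
split; first exact: isometry_injective ip_definite rhoD Hrho_inj VD HVip.
split=> // orth; split=> //.
exact: (ip_orthonormal_of_isometries rhoD (sh_one Hrho) Hrho_inj HVip orth).
Qed.
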